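(* Let $k$ be any field, let $H=\bigoplus_{n\ge0}H^n$ be a graded Hopf algebra with finite-dimensional homogeneous components, and let $L=\bigoplus_{n\ge0}(H^n)^*$ be its graded dual Hopf algebra. Assume $H^0=H_0$ is both cosemisimple and semisimple (so that $L^0$ is also). Then the following are equivalent: (i) $H$ is coradically graded and is generated as an algebra by $H^0$ and $H^1$; (ii) $L$ is coradically graded and is generated as an algebra by $L^0$ and $L^1$.
   Context: A graded coalgebra $C=\bigoplus_{i\ge0}C(i)$ is coradically graded if $C(0)=C_0$ (the coradical) and $C_1=C(0)\oplus C(1)$, where $C_0\subseteq C_1\subseteq\cdots$ is the coradical filtration. $H_0$ denotes the coradical of $H$. The graded dual $L$ has $L^n=(H^n)^*$ with the Hopf algebra structure dual to that of $H$. *)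

(* Graded Hopf algebras with finite-dimensional homogeneous
   components, presented by structure constants with respect to a chosen
   homogeneous basis (every such Hopf algebra is isomorphic to one of these). *)
From HB Require Import structures.
From mathcomp Require Import all_boot all_order all_algebra.
Set Implicit Arguments. Unset Strict Implicit. Unset Printing Implicit Defensive.
Import GRing.Theory.
Local Open Scope ring_scope.

(* H = (+)_n H^n, H^n = k^(gdim n) with basis e^n_0 .. e^n_(gdim n - 1).
   gmc i j n a b c = coefficient of e^n_c in e^i_a * e^j_b
   gdc n i j c a b = coefficient of e^i_a (x) e^j_b in Delta(e^n_c)
   gun u           = coefficient of e^0_u in 1   (1 lies in H^0)
   gcu u           = epsilon(e^0_u)               (epsilon vanishes on H^n, n>0)
   gan n a a'      = coefficient of e^n_a' in S(e^n_a)   (S graded) *)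
Record gdata (k : fieldType) := GData {
  gdim : nat -> nat;
  gmc : forall i j n, 'I_(gdim i) -> 'I_(gdim j) -> 'I_(gdim n) -> k;
  gdc : forall n i j, 'I_(gdim n) -> 'I_(gdim i) -> 'I_(gdim j) -> k;
  gun : 'I_(gdim 0) -> k;
  gcu : 'I_(gdim 0) -> k;
  gan : forall n, 'I_(gdim n) -> 'I_(gdim n) -> k }.
Arguments gdim {k} A n : rename.
Arguments gmc {k} A i j n a b c : rename.
Arguments gdc {k} A n i j c a b : rename.
Arguments gun {k} A u : rename.
Arguments gcu {k} A u : rename.
Arguments gan {k} A n a a' : rename.

Section Defs.
Variable k : fieldType.
Implicit Type A : gdata k.

Definition cuv A n : 'I_(gdim A n) -> k :=
  match n as m return 'I_(gdim A m) -> k with 0 => gcu A | _.+1 => fun _ => 0 end.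
Definition unv A n : 'I_(gdim A n) -> k :=
  match n as m return 'I_(gdim A m) -> k with 0 => gun A | _.+1 => fun _ => 0 end.

Definition is_ghopf A : Prop :=
  (forall i j n a b c, (i + j)%N != n -> gmc A i j n a b c = 0) /\
  (forall n i j c a b, (i + j)%N != n -> gdc A n i j c a b = 0) /\
  (forall i j l n a b g c,
     \sum_(e < gdim A (i + j)) gmc A i j (i + j) a b e * gmc A (i + j) l n e g c
   = \sum_(f < gdim A (j + l)) gmc A j l (j + l) b g f * gmc A i (j + l) n a f c) /\
  (forall j b c, \sum_(u < gdim A 0) gun A u * gmc A 0 j j u b c = (b == c)%:R) /\
  (forall i a c, \sum_(u < gdim A 0) gmc A i 0 i a u c * gun A u = (a == c)%:R) /\
  (forall n i j l c a b g,
     \sum_(e < gdim A (i + j)) gdc A n (i + j) l c e g * gdc A (i + j) i j e a b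
   = \sum_(f < gdim A (j + l)) gdc A n i (j + l) c a f * gdc A (j + l) j l f b g) /\
  (forall n c b, \sum_(u < gdim A 0) gcu A u * gdc A n 0 n c u b = (c == b)%:R) /\
  (forall n c b, \sum_(u < gdim A 0) gdc A n n 0 c b u * gcu A u = (c == b)%:R) /\
  (forall i j p q a b x y,
     \sum_(c < gdim A (i + j)) gmc A i j (i + j) a b c * gdc A (i + j) p q c x y
   = \sum_(i1 < i.+1) \sum_(i2 < i.+1) \sum_(j1 < j.+1) \sum_(j2 < j.+1)
       \sum_(a1 < gdim A i1) \sum_(a2 < gdim A i2)
       \sum_(b1 < gdim A j1) \sum_(b2 < gdim A j2)
       gdc A i i1 i2 a a1 a2 * gdc A j j1 j2 b b1 b2
       * gmc A i1 j1 p a1 b1 x * gmc A i2 j2 q a2 b2 y) /\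
  (forall a b, \sum_(c < gdim A 0) gmc A 0 0 0 a b c * gcu A c = gcu A a * gcu A b) /\
  (forall x y, \sum_(c < gdim A 0) gun A c * gdc A 0 0 0 c x y = gun A x * gun A y) /\
  (\sum_(u < gdim A 0) gun A u * gcu A u = 1) /\
  (forall n m c z,
     \sum_(i < n.+1) \sum_(j < n.+1) \sum_(a < gdim A i) \sum_(b < gdim A j)
       \sum_(a' < gdim A i) gdc A n i j c a b * gan A i a a' * gmc A i j m a' b z
   = @cuv A n c * @unv A m z) /\
  (forall n m c z,
     \sum_(i < n.+1) \sum_(j < n.+1) \sum_(a < gdim A i) \sum_(b < gdim A j)
       \sum_(b' < gdim A j) gdc A n i j c a b * gan A j b b' * gmc A i j m a b' z
   = @cuv A n c * @unv A m z).

(* Graded dual L = (+)_n (H^n)^*, written in the dual bases. *)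
Definition gdual A : gdata k :=
  @GData k (gdim A)
    (fun i j n a b c => gdc A n i j c a b)
    (fun n i j c a b => gmc A i j n a b c)
    (gcu A) (gun A)
    (fun n c a => gan A n a c).

(* Elements of H: finitely supported families of homogeneous components. *)
Definition gvec A := forall n, 'rV[k]_(gdim A n).
Definition fsupp A (x : gvec A) : Prop := exists N, forall n, (N <= n)%N -> x n = 0.
Definition gzero A : gvec A := fun n => 0.
Definition homog A (d : nat) (x : gvec A) : Prop := forall m, m != d -> x m = 0.

Definition gmul A (x y : gvec A) : gvec A := fun n =>
  \row_c \sum_(i < n.+1) \sum_(j < n.+1) \sum_(a < gdim A i) \sum_(b < gdim A j)
     x i 0 a * y j 0 b * gmc A i j n a b c.

(* Elements of H (x) H = (+)_(i,j) H^i (x) H^j, with H^i (x) H^j = matrices. *)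
Definition gten A := forall i j, 'M[k]_(gdim A i, gdim A j).
Definition gcomul A (x : gvec A) : gten A := fun i j =>
  \matrix_(a, b) \sum_(n < (i + j).+1) \sum_(c < gdim A n) x n 0 c * gdc A n i j c a b.

Definition inTens A (P Q : gvec A -> Prop) (t : gten A) : Prop :=
  exists m (u v : 'I_m -> gvec A), (forall r, P (u r) /\ Q (v r)) /\
    forall i j, t i j = \sum_(r < m) (u r i)^T *m (v r j).

Definition subspace A (P : gvec A -> Prop) : Prop :=
  (forall x, P x -> fsupp x) /\ P (gzero A) /\
  forall (c : k) x y, P x -> P y -> P (fun n => c *: x n + y n).

Definition subcoalg A (D : gvec A -> Prop) : Prop :=
  subspace D /\ forall x, D x -> inTens D D (gcomul x).

Definition simple_subcoalg A (D : gvec A -> Prop) : Prop :=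
  subcoalg D /\ (exists x, D x /\ exists n, x n != 0) /\
  forall E, subcoalg E -> (forall x, E x -> D x) ->
    (forall x, E x -> forall n, x n = 0) \/ (forall x, D x -> E x).

Definition sum_of_simples A (D : gvec A -> Prop) (x : gvec A) : Prop :=
  exists m (Ds : 'I_m -> gvec A -> Prop) (y : 'I_m -> gvec A),
    (forall r, simple_subcoalg (Ds r) /\ (forall z, Ds r z -> D z) /\ Ds r (y r)) /\
    forall n, x n = \sum_(r < m) y r n.

Definition coradical A (x : gvec A) : Prop := sum_of_simples (@fsupp A) x.

Definition cosemisimple A (D : gvec A -> Prop) : Prop :=
  subcoalg D /\ forall x, D x -> sum_of_simples D x.

(* second term of the coradical filtration: Delta^-1(H (x) H_0 + H_0 (x) H) *)
Definition corad1 A (x : gvec A) : Prop :=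
  fsupp x /\ exists t1 t2 : gten A,
    inTens (@fsupp A) (@coradical A) t1 /\ inTens (@coradical A) (@fsupp A) t2 /\
    forall i j, gcomul x i j = t1 i j + t2 i j.

Definition coradically_graded A : Prop :=
  (forall x : gvec A, homog 0 x <-> coradical x) /\
  (forall x : gvec A, corad1 x <->
     exists y z, homog 0 y /\ homog 1 z /\ forall n, x n = y n + z n).

Definition gen01 A : Prop :=
  forall P : gvec A -> Prop, subspace P ->
    (forall x y, P x -> P y -> P (gmul x y)) ->
    (forall x, homog 0 x -> P x) -> (forall x, homog 1 x -> P x) ->
    forall x, fsupp x -> P x.

Definition mul0 A (x y : 'rV[k]_(gdim A 0)) : 'rV[k]_(gdim A 0) :=
  \row_c \sum_(a < gdim A 0) \sum_(b < gdim A 0) x 0 a * y 0 b * gmc A 0 0 0 a b c.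
Definition left_ideal0 A (I : 'M[k]_(gdim A 0)) : Prop :=
  forall x y : 'rV[k]_(gdim A 0), (x <= I)%MS -> (mul0 y x <= I)%MS.
Definition semisimple0 A : Prop :=
  forall I : 'M[k]_(gdim A 0), left_ideal0 I -> exists J : 'M[k]_(gdim A 0), left_ideal0 J /\
    (I :&: J == (0 : 'M[k]_(gdim A 0)))%MS /\ (1%:M <= I + J)%MS.

End Defs.

(* Once H_0 = H^0, both conditions of (i) are linear conditions on each degree
   n >= 2: H is coradically graded iff the part of Delta landing in
   (+)_(0<i<n) H^i (x) H^(n-i) is injective on H^n, and H is generated by H^0
   and H^1 iff H^n is spanned by the products H^i H^(n-i), 0 < i < n (this span
   is stable under multiplication by H^0 by associativity).  In the dual bases
   the comultiplication of L is the transpose of the multiplication of H and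
   conversely, so the injectivity condition for one algebra is the spanning
   condition for the other, and (i) and (ii) are exchanged.
   What remains is L_0 = L^0.  A simple subcoalgebra meets degree 0 (apply
   id (x) epsilon to the top component of Delta x), hence lies there.
   Conversely L^0 = (H^0)^* is cosemisimple: subcoalgebras of L^0 are the
   orthogonals of two-sided ideals of H^0, and in the semisimple algebra H^0 a
   two-sided ideal is complemented by its annihilator, so every subcoalgebra of
   L^0 has a complementary subcoalgebra and L^0 splits into simple ones. *)

From mathcomp Require Import all_boot all_order all_algebra.
From Stdlib Require Import FunctionalExtensionality Classical ClassicalEpsilon.
From mathcomp Require Import zify ring.
Set Implicit Arguments. Unset Strict Implicit. Unset Printing Implicit Defensive.
Import GRing.Theory.
Local Open Scope ring_scope.

Lemma sum_nat_single (V : nmodType) (F : nat -> V) N n :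
  (forall m, m != n -> F m = 0) ->
  \sum_(m < N) F m = if (n < N)%N then F n else 0.
Proof.
move=> HF; case: ifP => hn.
  rewrite (bigD1 (Ordinal hn)) //= big1 ?addr0 // => m hm; apply: HF.
  by apply: contra hm => /eqP e; apply/eqP/val_inj.
by rewrite big1 // => m _; apply: HF; apply: contraFN hn => /eqP <-.
Qed.

Lemma sum_mul_delta (k : fieldType) N (F : 'I_N -> k) (b : 'I_N) :
  \sum_(c < N) F c * (c == b)%:R = F b.
Proof.
rewrite (bigD1 b) //= eqxx mulr1 big1 ?addr0 // => c hc.
by rewrite (negbTE hc) mulr0.
Qed.

Lemma mulmx_sum_col_row (k : fieldType) p q r (X : 'M[k]_(p, q)) (Y : 'M[k]_(q, r)) :
  \sum_(b < q) col b X *m row b Y = X *m Y.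
Proof.
apply/matrixP => a c; rewrite summxE !mxE; apply: eq_bigr => b _.
by rewrite !mxE big_ord1 !mxE.
Qed.

Section MatrixFacts.
Variables (k : fieldType) (d : nat).

Lemma mulmx_tr_kermx m p q (N : 'M[k]_(m, d)) (B : 'M[k]_(p, d)) (C : 'M[k]_(q, d)) :
  (B <= kermx N^T)%MS -> (C <= N)%MS -> C *m B^T = 0.
Proof.
move/sub_kermxP => hB /submxP [w ->].
by rewrite -mulmxA -[N]trmxK -trmx_mul hB trmx0 mulmx0.
Qed.

Lemma sub_kermx_trP m p (K : 'M[k]_(m, d)) (B : 'M[k]_(p, d)) :
  (forall g : 'rV[k]_d, (g <= K)%MS -> B *m g^T = 0) -> (B <= kermx K^T)%MS.
Proof.
move=> h; apply/sub_kermxP/matrixP => i j; rewrite [RHS]mxE.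
have /matrixP/(_ i 0) := h (row j K) (row_sub _ _); rewrite !mxE => e.
by rewrite -[RHS]e; apply: eq_bigr => c _; rewrite !mxE.
Qed.

Lemma capmx0_eq0 (I J : 'M[k]_d) (x : 'rV[k]_d) : (I :&: J == (0 : 'M[k]_d))%MS ->
  (x <= I)%MS -> (x <= J)%MS -> x = 0.
Proof.
move=> /andP [h _] hI hJ; apply/eqP; rewrite -submx0.
by apply: submx_trans h; rewrite sub_capmx hI hJ.
Qed.

Lemma rank_cap0 m n (X : 'M[k]_(m, d)) (Y : 'M[k]_(n, d)) :
  (forall g : 'rV[k]_d, (g <= X)%MS -> (g <= Y)%MS -> g = 0) -> \rank (X :&: Y)%MS = 0%N.
Proof.
move=> XY0; apply/eqP; rewrite mxrank_eq0; apply/eqP/row_matrixP => j; rewrite row0.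
by apply: XY0; apply: submx_trans (row_sub j _) _; [exact: capmxSl | exact: capmxSr].
Qed.

Lemma submx_of_linear_pred (Q : 'rV[k]_d -> Prop) :
  Q 0 -> (forall c u v, Q u -> Q v -> Q (c *: u + v)) ->
  exists M : 'M[k]_d, forall v, Q v <-> (v <= M)%MS.
Proof.
move=> Q0 QL.
suff H : forall m (M : 'M[k]_d), (forall u, (u <= M)%MS -> Q u) -> (d - \rank M <= m)%N ->
  exists M : 'M[k]_d, forall v, Q v <-> (v <= M)%MS.
  by apply: (H d 0) => [u /submx0null ->|]; rewrite ?leq_subr.
elim=> [|m IH] M HM hr.
  exists M => v; split => [_|]; last exact: HM.
  by apply: submx_full; rewrite /row_full eqn_leq rank_leq_col /= -subn_eq0 -leqn0.
have [H|] := classic (forall v, Q v -> (v <= M)%MS); first by exists M => v; split => [/H|/HM].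
move/not_all_ex_not => [v nQ]; have Qv := @not_imply_elim _ _ nQ; have nvM := @not_imply_elim2 _ _ nQ.
apply: (IH (M + v)%MS).
  move=> u /sub_addsmxP [[w1 w2] /= ->].
  have /sub_rVP [c ->] : (w2 *m v <= v)%MS by apply: submxMl.
  by rewrite addrC; apply: QL => //; apply: HM; apply: submxMl.
have lt : (M < M + v)%MS.
  rewrite ltmxE addsmxSl /=; apply/negP => h; apply: nvM.
  by apply: submx_trans h; apply: addsmxSr.
have := rank_ltmx lt; have := rank_leq_col (M + v)%MS; lia.
Qed.


End MatrixFacts.

Section GradedVectors.
Variables (k : fieldType) (A : gdata k).

Definition gsingle n (v : 'rV[k]_(gdim A n)) : gvec A := fun m =>
  \row_(c < gdim A m) \sum_(c' < gdim A n) v 0 c' * ((m == n) && (c == c' :> nat))%:R.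

Definition gbasis n (a : 'I_(gdim A n)) : gvec A := gsingle 'e_a.

Lemma gsingle_id n v : @gsingle n v n = v.
Proof.
apply/rowP => c; rewrite mxE eqxx /= -[RHS](sum_mul_delta (fun c' => v 0 c') c).
by apply: eq_bigr => c' _; rewrite (inj_eq val_inj) eq_sym.
Qed.

Lemma gsingle_neq n v m : m != n -> @gsingle n v m = 0.
Proof. by move=> hm; apply/rowP => c; rewrite !mxE big1 // => c' _; rewrite (negbTE hm) mulr0. Qed.

Lemma homog_gsingle n v : homog n (@gsingle n v).
Proof. by move=> m hm; rewrite gsingle_neq. Qed.

Lemma homog_fsupp n (x : gvec A) : homog n x -> fsupp x.
Proof. by move=> h; exists n.+1 => m hm; rewrite h // neq_ltn hm orbT. Qed.

Lemma homog_gsingleE n (x : gvec A) : homog n x -> x = gsingle (x n).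
Proof.
move=> h; apply: functional_extensionality_dep => m.
by case: (eqVneq m n) => [->|hm]; rewrite ?gsingle_id // gsingle_neq // h.
Qed.

Lemma gsingle0 n : @gsingle n 0 = gzero A.
Proof.
apply: functional_extensionality_dep => m; apply/rowP => c; rewrite !mxE.
by rewrite big1 // => c' _; rewrite mxE mul0r.
Qed.

Lemma gsingle_lin n c (u v : 'rV[k]_(gdim A n)) :
  gsingle (c *: u + v) = (fun m => c *: gsingle u m + gsingle v m).
Proof.
apply: functional_extensionality_dep => m; apply/rowP => c'; rewrite !mxE.
rewrite mulr_sumr -big_split /=; apply: eq_bigr => b _; rewrite !mxE; ring.
Qed.

Lemma gvec_sum_gsingle (x : gvec A) :
  fsupp x -> exists N, x = (fun n => \sum_(m < N) gsingle (x m) n).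
Proof.
case=> N hN; exists N; apply: functional_extensionality_dep => n.
rewrite (sum_nat_single (F := fun m : nat => gsingle (x m) n) _ (n := n)).
  by case: ifP => h; rewrite ?gsingle_id // hN // leqNgt h.
by move=> m hm; rewrite gsingle_neq // eq_sym.
Qed.

Lemma subspace_sum (P : gvec A -> Prop) : subspace P ->
  forall m (c : 'I_m -> k) (w : 'I_m -> gvec A), (forall r, P (w r)) ->
  P (fun n => \sum_(r < m) c r *: w r n).
Proof.
move=> [_ [P0 PL]]; elim=> [|m IH] c w Pw.
  have -> : (fun n => \sum_(r < 0) c r *: w r n) = gzero A.
    by apply: functional_extensionality_dep => n; rewrite big_ord0.
  exact: P0.
have -> : (fun n => \sum_(r < m.+1) c r *: w r n) =
  (fun n => c ord_max *: w ord_max n + \sum_(r < m) c (widen_ord (leqnSn m) r) *: w (widen_ord (leqnSn m) r) n).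
  by apply: functional_extensionality_dep => n; rewrite big_ord_recr /= addrC.
by apply: PL => //; apply: IH.
Qed.

Hypothesis comul_graded : forall n i j c a b, (i + j)%N != n -> gdc A n i j c a b = 0.

Lemma gcomulE (x : gvec A) i j a b :
  gcomul x i j a b = \sum_c x (i + j)%N 0 c * gdc A (i + j) i j c a b.
Proof.
rewrite mxE (sum_nat_single (F := fun m : nat => \sum_(c < gdim A m) x m 0 c * gdc A m i j c a b)
  _ (n := (i + j)%N)) ?ltnSn //.
by move=> m hm; rewrite big1 // => c _; rewrite comul_graded ?mulr0 // eq_sym.
Qed.

Lemma gcomul_gsingle n (v : 'rV[k]_(gdim A n)) i j :
  gcomul (gsingle v) i j = \matrix_(a, b) \sum_c v 0 c * gdc A n i j c a b.
Proof.
apply/matrixP => a b; rewrite gcomulE !mxE.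
have [e|hn] := eqVneq n (i + j)%N; first by subst n; rewrite gsingle_id.
rewrite gsingle_neq 1?eq_sym // [LHS]big1 => [|c _]; last by rewrite mxE mul0r.
by rewrite big1 // => c _; rewrite comul_graded ?mulr0 // eq_sym.
Qed.

Lemma gcomul_vanish (x : gvec A) i j : x (i + j)%N = 0 -> gcomul x i j = 0.
Proof.
by move=> h; apply/matrixP => a b; rewrite gcomulE h mxE big1 // => c _; rewrite mxE mul0r.
Qed.

End GradedVectors.

Section CoradicallyGraded.
Variables (k : fieldType) (A : gdata k).
Hypothesis comul_graded : forall n i j c a b, (i + j)%N != n -> gdc A n i j c a b = 0.
Hypothesis coradicalP : forall x : gvec A, homog 0 x <-> coradical x.

Definition tensL (F : forall i, 'M[k]_(gdim A i, gdim A 0)) : gten A :=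
  fun i j => \sum_b col b (F i) *m gbasis b j.
Definition tensR (F : forall j, 'M[k]_(gdim A 0, gdim A j)) : gten A :=
  fun i j => \sum_a (gbasis a i)^T *m row a (F j).

Lemma tensL0 F i : tensL F i 0 = F i.
Proof.
rewrite /tensL /gbasis -[RHS]mulmx1 -mulmx_sum_col_row.
by apply: eq_bigr => b _; rewrite gsingle_id row1.
Qed.

Lemma tensL_neq0 F i j : j != 0%N -> tensL F i j = 0.
Proof. by move=> hj; rewrite /tensL /gbasis big1 // => b _; rewrite gsingle_neq // mulmx0. Qed.

Lemma tensR0 F j : tensR F 0 j = F j.
Proof.
rewrite /tensR /gbasis -[RHS]mul1mx -mulmx_sum_col_row.
by apply: eq_bigr => a _; rewrite gsingle_id col1 trmx_delta.
Qed.

Lemma tensR_neq0 F i j : i != 0%N -> tensR F i j = 0.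
Proof. by move=> hi; rewrite /tensR /gbasis big1 // => a _; rewrite gsingle_neq // trmx0 mul0mx. Qed.

Lemma tensL_inTens F : (exists N, forall i, (N <= i)%N -> F i = 0) ->
  inTens (@fsupp _ A) (@coradical _ A) (tensL F).
Proof.
case=> N hN; exists (gdim A 0), (fun b i => (col b (F i))^T), (@gbasis _ A 0); split.
  move=> b; split; last exact/coradicalP/homog_gsingle.
  by exists N => i /hN ->; rewrite col0 trmx0.
by move=> i j; apply: eq_bigr => b _; rewrite trmxK.
Qed.

Lemma tensR_inTens F : (exists N, forall j, (N <= j)%N -> F j = 0) ->
  inTens (@coradical _ A) (@fsupp _ A) (tensR F).
Proof.
case=> N hN; exists (gdim A 0), (@gbasis _ A 0), (fun a j => row a (F j)); split => //.
move=> a; split; first exact/coradicalP/homog_gsingle.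
by exists N => j /hN ->; rewrite row0.
Qed.

Lemma fsupp_gcomul (x : gvec A) : fsupp x ->
  exists N, forall i j, (N <= i + j)%N -> gcomul x i j = 0.
Proof. by case=> N hN; exists N => i j /hN; apply: gcomul_vanish. Qed.

Lemma corad1P (x : gvec A) : corad1 x <->
  fsupp x /\ forall i j, (0 < i)%N -> (0 < j)%N -> gcomul x i j = 0.
Proof.
split.
  case=> fx [t1 [t2 [[m1 [u1 [v1 [h1 e1]]]] [[m2 [u2 [v2 [h2 e2]]]] e]]]].
  split=> // i j; rewrite !lt0n => hi hj; rewrite e e1 e2.
  have -> : \sum_(r < m1) (u1 r i)^T *m v1 r j = 0.
    apply: big1 => r _; have [_ /coradicalP hv] := h1 r.
    by rewrite (hv j hj) mulmx0.
  have -> : \sum_(r < m2) (u2 r i)^T *m v2 r j = 0.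
    apply: big1 => r _; have [/coradicalP hu _] := h2 r.
    by rewrite (hu i hi) trmx0 mul0mx.
  by rewrite addr0.
case=> fx strict; have [N hN] := fsupp_gcomul fx.
split=> //; exists (tensL (fun i => gcomul x i 0)),
  (tensR (fun j => gcomul x 0 j *+ (j != 0%N))).
split; first by apply: tensL_inTens; exists N => i hi; apply: hN; rewrite addn0.
split; first by apply: tensR_inTens; exists N => j hj; rewrite hN ?mul0rn.
move=> i j; have [->|hj] := eqVneq j 0%N.
  rewrite tensL0; have [->|hi] := eqVneq i 0%N; last by rewrite tensR_neq0 ?addr0.
  by rewrite tensR0 eqxx mulr0n addr0.
rewrite tensL_neq0 // add0r; have [->|hi] := eqVneq i 0%N; first by rewrite tensR0 hj.
by rewrite tensR_neq0 // strict // lt0n.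
Qed.

Definition strict_comul0 n (x : 'rV[k]_(gdim A n)) :=
  forall i j a b, (0 < i)%N -> (0 < j)%N -> (i + j)%N = n ->
    \sum_c x 0 c * gdc A n i j c a b = 0.

Definition strict_comul_inj :=
  forall n (x : 'rV[k]_(gdim A n)), (2 <= n)%N -> strict_comul0 x -> x = 0.

Lemma low_degreesP (x : gvec A) : (forall n, (2 <= n)%N -> x n = 0) <->
  exists y z, homog 0 y /\ homog 1 z /\ forall n, x n = y n + z n.
Proof.
split=> [x2|[y [z [hy [hz hx]]]] [|[|n]] // _]; last by rewrite hx hy // hz // addr0.
exists (gsingle (x 0%N)), (gsingle (x 1%N)).
split; first exact: homog_gsingle.
split; first exact: homog_gsingle.
case=> [|[|n]]; rewrite ?gsingle_id !gsingle_neq ?addr0 ?add0r //.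
by rewrite x2 ?addr0.
Qed.

Lemma strict_comul_inj_low_degrees : strict_comul_inj -> forall x : gvec A,
  (forall i j, (0 < i)%N -> (0 < j)%N -> gcomul x i j = 0) ->
  forall n, (2 <= n)%N -> x n = 0.
Proof.
move=> inj x strict n hn; apply: inj => // i j a b hi hj hij; subst n.
by rewrite -gcomulE // strict // mxE.
Qed.

Lemma coradically_gradedP : coradically_graded A <-> strict_comul_inj.
Proof.
split=> [[_ grad] n x hn strict|inj]; last first.
  split=> // x; rewrite corad1P -low_degreesP; split=> [[_ /(strict_comul_inj_low_degrees inj)] //|x2].
  split; first by exists 2%N.
  by move=> i j hi hj; apply: (gcomul_vanish comul_graded); rewrite x2 // -(addn1 1) leq_add.
have : corad1 (gsingle x).
  apply/corad1P; split; first exact: homog_fsupp (homog_gsingle x).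
  move=> i j hi hj; rewrite gcomul_gsingle //; apply/matrixP => a b; rewrite !mxE.
  have [hij|hij] := eqVneq (i + j)%N n; first exact: strict.
  by rewrite big1 // => c _; rewrite comul_graded ?mulr0.
by move/grad/low_degreesP/(_ n hn); rewrite gsingle_id.
Qed.

End CoradicallyGraded.

Section Products.
Variables (k : fieldType) (A : gdata k).

Definition mul_row n i (a : 'I_(gdim A i)) (b : 'I_(gdim A (n - i))) : 'rV[k]_(gdim A n) :=
  \row_c gmc A i (n - i) n a b c.

Definition prodmx n : 'M[k]_(gdim A n) :=
  (\sum_(i < n | (0 < i)%N) \sum_a \sum_b <<@mul_row n i a b>>)%MS.

Definition products_span := forall n, (2 <= n)%N -> row_full (prodmx n).

Lemma mul_row_sub n (i : 'I_n) a b : (0 < i)%N -> (@mul_row n i a b <= prodmx n)%MS.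
Proof.
move=> hi; apply: (sumsmx_sup i) => //; apply: (sumsmx_sup a) => //.
by apply: (sumsmx_sup b) => //; rewrite genmxE.
Qed.

Lemma prodmx_subP n m (B : 'M[k]_(m, gdim A n)) :
  (forall i (a : 'I_(gdim A i)) b, (0 < i)%N -> (i < n)%N -> (@mul_row n i a b <= B)%MS) ->
  (prodmx n <= B)%MS.
Proof.
move=> H; apply/sumsmx_subP => i hi; apply/sumsmx_subP => a _; apply/sumsmx_subP => b _.
by rewrite genmxE; apply: H.
Qed.

End Products.

Section Duality.
Variables (k : fieldType) (A : gdata k).

Lemma kermx_prodmx_dual n (x : 'rV[k]_(gdim A n)) :
  (x <= kermx (prodmx (gdual A) n)^T)%MS <-> strict_comul0 x.
Proof.
have pairingE i a b : (@mul_row _ (gdual A) n i a b *m x^T) 0 0 =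
    \sum_c x 0 c * gdc A n i (n - i) c a b.
  by rewrite !mxE; apply: eq_bigr => c _; rewrite !mxE mulrC.
split=> [/sub_kermxP xS i j a b hi hj hij|strict].
  have ej : j = (n - i)%N by lia.
  subst j; have hin : (i < n)%N by lia.
  rewrite -pairingE; have /submxP [w ->] := @mul_row_sub _ (gdual A) n (Ordinal hin) a b hi.
  rewrite -mulmxA; have -> : prodmx (gdual A) n *m x^T = 0 by rewrite -[LHS]trmxK trmx_mul trmxK xS trmx0.
  by rewrite mulmx0 mxE.
apply/sub_kermxP; apply: trmx_inj; rewrite trmx_mul trmxK trmx0; apply/sub_kermxP.
apply: prodmx_subP => i a b hi hin; apply/sub_kermxP/matrixP => u v.
by rewrite !ord1 pairingE mxE strict // ?subn_gt0 // subnKC // ltnW.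
Qed.

Lemma strict_comul_inj_dual : strict_comul_inj A <-> products_span (gdual A).
Proof.
have fullE n : row_full (prodmx (gdual A) n) = (kermx (prodmx (gdual A) n)^T == 0).
  by rewrite kermx_eq0 /row_free mxrank_tr.
split=> [inj n hn|span n x hn /(kermx_prodmx_dual x)].
  rewrite fullE; apply/eqP/row_matrixP => r; rewrite row0.
  by apply: inj => //; apply/kermx_prodmx_dual/row_sub.
have /eqP -> : kermx (prodmx (gdual A) n)^T == 0 by rewrite -fullE span.
by rewrite submx0 => /eqP.
Qed.

End Duality.

Section Generation.
Variables (k : fieldType) (A : gdata k).
Hypothesis mul_graded : forall i j n a b c, (i + j)%N != n -> gmc A i j n a b c = 0.

Definition hmul i j n (u : 'rV[k]_(gdim A i)) (v : 'rV[k]_(gdim A j)) : 'rV[k]_(gdim A n) :=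
  \row_c \sum_a \sum_b u 0 a * v 0 b * gmc A i j n a b c.

Lemma gmul_hmul (x y : gvec A) n :
  gmul x y n = \sum_(i < n.+1) \sum_(j < n.+1) hmul n (x i) (y j).
Proof.
apply/rowP => c; rewrite !mxE summxE; apply: eq_bigr => i _.
by rewrite summxE; apply: eq_bigr => j _; rewrite mxE.
Qed.

Lemma hmul0l i j n v : @hmul i j n 0 v = 0.
Proof. by apply/rowP => c; rewrite !mxE big1 // => a _; rewrite big1 // => b _; rewrite mxE !mul0r. Qed.

Lemma hmul0r i j n u : @hmul i j n u 0 = 0.
Proof. by apply/rowP => c; rewrite !mxE big1 // => a _; rewrite big1 // => b _; rewrite mxE mulr0 mul0r. Qed.

Lemma hmul_linl i j n c u w v : @hmul i j n (c *: u + w) v = c *: hmul n u v + hmul n w v.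
Proof.
apply/rowP => c'; rewrite !mxE mulr_sumr -big_split /=; apply: eq_bigr => a _.
rewrite mulr_sumr -big_split /=; apply: eq_bigr => b _; rewrite !mxE; ring.
Qed.

Lemma hmul_linr i j n u c v w : @hmul i j n u (c *: v + w) = c *: hmul n u v + hmul n u w.
Proof.
apply/rowP => c'; rewrite !mxE mulr_sumr -big_split /=; apply: eq_bigr => a _.
rewrite mulr_sumr -big_split /=; apply: eq_bigr => b _; rewrite !mxE; ring.
Qed.

Lemma hmul_graded i j n u v : (i + j)%N != n -> @hmul i j n u v = 0.
Proof.
move=> h; apply/rowP => c; rewrite !mxE big1 // => a _; rewrite big1 // => b _.
by rewrite mul_graded // mulr0.
Qed.

Lemma gmul_gsingle i j (u : 'rV[k]_(gdim A i)) (v : 'rV[k]_(gdim A j)) :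
  gmul (gsingle u) (gsingle v) = gsingle (hmul (i + j) u v).
Proof.
apply: functional_extensionality_dep => m; rewrite gmul_hmul.
rewrite (sum_nat_single (F := fun i' : nat => \sum_(j' < m.+1) hmul m (gsingle u i') (gsingle v j'))
  _ (n := i)) => [|i' hi']; last by rewrite big1 // => j' _; rewrite gsingle_neq // hmul0l.
rewrite (sum_nat_single (F := fun j' : nat => hmul m (gsingle u i) (gsingle v j'))
  _ (n := j)) => [|j' hj']; last by rewrite (gsingle_neq v hj') hmul0r.
have [e|ne] := eqVneq m (i + j)%N.
  by subst m; rewrite ltnS leq_addr ltnS leq_addl !gsingle_id.
by rewrite (gsingle_neq _ ne) hmul_graded 1?eq_sym // !if_same.
Qed.

Lemma hmul_delta n i (a : 'I_(gdim A i)) (b : 'I_(gdim A (n - i))) :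
  hmul n 'e_a 'e_b = mul_row a b.
Proof.
apply/rowP => c; rewrite !mxE (bigD1 a) //= [X in _ + X]big1 ?addr0 => [|a' ha']; last first.
  by rewrite big1 // => b' _; rewrite !mxE /= (negbTE ha') !mul0r.
rewrite (bigD1 b) //= [X in _ + X]big1 ?addr0 => [|b' hb']; last first.
  by rewrite !mxE /= (negbTE hb') mulr0 mul0r.
by rewrite !mxE !eqxx !mul1r.
Qed.

Lemma products_span_gen01 : products_span A -> gen01 A.
Proof.
move=> span P PS Pmul P0 P1.
have [Pf [Pz PL]] := PS.
have Pn : forall n (y : 'rV[k]_(gdim A n)), P (gsingle y).
  elim/ltn_ind => n IH y.
  case: n IH y => [|[|n]] IH y; [exact/P0/homog_gsingle | exact/P1/homog_gsingle |].
  have [M HM] : exists M : 'M[k]_(gdim A n.+2), forall v, P (gsingle v) <-> (v <= M)%MS.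
    apply: submx_of_linear_pred; first by rewrite gsingle0.
    by move=> c u v Pu Pv; rewrite gsingle_lin; apply: PL.
  apply/HM; apply: submx_trans (submx_full y (span n.+2 isT)) _.
  apply: prodmx_subP => i a b hi hin; apply/HM; rewrite -hmul_delta -[X in gsingle (hmul X _ _)](subnKC (ltnW hin)).
  by rewrite -gmul_gsingle; apply: Pmul; apply: IH; lia.
move=> x /gvec_sum_gsingle [N ->].
have -> : (fun n => \sum_(m < N) gsingle (x m) n) = (fun n => \sum_(m < N) 1 *: gsingle (x m) n).
  by apply: functional_extensionality_dep => n; under [RHS]eq_bigr do rewrite scale1r.
by apply: subspace_sum.
Qed.

Hypothesis mul_assoc : forall i j l n a b g c,
     \sum_(e < gdim A (i + j)) gmc A i j (i + j) a b e * gmc A (i + j) l n e g c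
   = \sum_(f < gdim A (j + l)) gmc A j l (j + l) b g f * gmc A i (j + l) n a f c.

Lemma mul_assoc_at i j l s p n (hs : (i + j)%N = s) (hp : (j + l)%N = p) a b g c :
     \sum_(e < gdim A s) gmc A i j s a b e * gmc A s l n e g c
   = \sum_(f < gdim A p) gmc A j l p b g f * gmc A i p n a f c.
Proof. by subst s p; apply: mul_assoc. Qed.

Lemma hmul_prodmx n i (hi : (0 < i)%N) (hin : (i < n)%N) u v :
  (@hmul i (n - i) n u v <= prodmx A n)%MS.
Proof.
have -> : hmul n u v = \sum_a \sum_b (u 0 a * v 0 b) *: @mul_row _ A n i a b.
  apply/rowP => c; rewrite !mxE summxE; apply: eq_bigr => a _.
  by rewrite summxE; apply: eq_bigr => b _; rewrite !mxE.
apply: summx_sub => a _; apply: summx_sub => b _; apply: scalemx_sub.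
exact: (@mul_row_sub _ A n (Ordinal hin) a b hi).
Qed.

Lemma prodmx_stable n (f : 'rV[k]_(gdim A n) -> 'rV[k]_(gdim A n)) :
  f 0 = 0 -> (forall c v w, f (c *: v + w) = c *: f v + f w) ->
  (forall i (a : 'I_(gdim A i)) b, (0 < i)%N -> (i < n)%N -> (f (mul_row a b) <= prodmx A n)%MS) ->
  forall v, (v <= prodmx A n)%MS -> (f v <= prodmx A n)%MS.
Proof.
move=> f0 fL fS.
have [M HM] : exists M : 'M[k]_(gdim A n), forall v, (f v <= prodmx A n)%MS <-> (v <= M)%MS.
  apply: submx_of_linear_pred; first by rewrite f0 sub0mx.
  by move=> c u w h1 h2; rewrite fL addmx_sub // scalemx_sub.
move=> v hv; apply/HM; apply: submx_trans hv _.
by apply: prodmx_subP => i a b hi hin; apply/HM; apply: fS.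
Qed.

Lemma hmul0_prodmx n u v : (v <= prodmx A n)%MS -> (@hmul 0 n n u v <= prodmx A n)%MS.
Proof.
apply: prodmx_stable; [exact: hmul0r | exact: hmul_linr |] => i a' b' hi hin.
have -> : hmul n u (mul_row a' b') =
    \sum_a \sum_e (u 0 a * gmc A 0 i i a a' e) *: @mul_row _ A n i e b'.
  apply/rowP => c; rewrite !mxE summxE; apply: eq_bigr => a _.
  rewrite summxE; under eq_bigr => e _ do rewrite !mxE -mulrA.
  rewrite -mulr_sumr -(@mul_assoc_at 0 i (n - i) i n n (add0n i) (subnKC (ltnW hin))).
  by rewrite mulr_sumr; apply: eq_bigr => b _; rewrite !mxE; ring.
apply: summx_sub => a _; apply: summx_sub => e _; apply: scalemx_sub.
exact: (@mul_row_sub _ A n (Ordinal hin) e b' hi).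
Qed.

Lemma hmul_prodmx0 n u v : (u <= prodmx A n)%MS -> (@hmul n 0 n u v <= prodmx A n)%MS.
Proof.
apply: (@prodmx_stable n (fun u => hmul n u v)); [exact: hmul0l | move=> ? ? ?; apply: hmul_linl |].
move=> i a' b' hi hin.
have -> : hmul n (mul_row a' b') v =
    \sum_b \sum_f (v 0 b * gmc A (n - i) 0 (n - i) b' b f) *: @mul_row _ A n i a' f.
  apply/rowP => c; rewrite !mxE summxE exchange_big /=; apply: eq_bigr => b _.
  rewrite summxE; under eq_bigr => e _ do rewrite !mxE -mulrA mulrCA.
  rewrite -mulr_sumr (@mul_assoc_at i (n - i) 0 n (n - i) n (subnKC (ltnW hin)) (addn0 _)).
  by rewrite mulr_sumr; apply: eq_bigr => a _; rewrite !mxE; ring.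
apply: summx_sub => b _; apply: summx_sub => f _; apply: scalemx_sub.
exact: (@mul_row_sub _ A n (Ordinal hin) a' f hi).
Qed.

Lemma hmul_prodmx_ge2 n (x y : gvec A) :
  (forall m, (2 <= m)%N -> (x m <= prodmx A m)%MS) ->
  (forall m, (2 <= m)%N -> (y m <= prodmx A m)%MS) ->
  (2 <= n)%N -> forall i j, (hmul n (x i) (y j) <= prodmx A n)%MS.
Proof.
move=> Px Py hn i j.
have [hij|hij] := eqVneq (i + j)%N n; last by rewrite hmul_graded // sub0mx.
case: i hij => [|i] hij; first by rewrite add0n in hij; subst j; apply/hmul0_prodmx/Py.
case: j hij => [|j] hij; first by rewrite addn0 in hij; subst n; apply/hmul_prodmx0/Px.
have -> : j.+1 = (n - i.+1)%N by lia.
apply: hmul_prodmx; lia.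
Qed.

Lemma gen01_products_span : gen01 A -> products_span A.
Proof.
move=> gen.
pose P (x : gvec A) := fsupp x /\ forall m, (2 <= m)%N -> (x m <= prodmx A m)%MS.
have PS : subspace P.
  split; first by move=> x [].
  split; first by split; [exists 0%N | move=> m _; rewrite sub0mx].
  move=> c x y [[Nx hx] Px] [[Ny hy] Py]; split.
    by exists (Nx + Ny)%N => m hm; rewrite hx ?hy ?scaler0 ?addr0 //; lia.
  by move=> m hm; rewrite addmx_sub ?scalemx_sub ?Px ?Py.
have Pmul x y : P x -> P y -> P (gmul x y).
  move=> [[Nx hx] Px] [[Ny hy] Py]; split.
    exists (Nx + Ny)%N => m hm; rewrite gmul_hmul big1 // => i _; rewrite big1 // => j _.
    have [hij|hij] := eqVneq (i + j)%N m; last exact: hmul_graded.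
    have [hi|hi] := leqP Nx i; first by rewrite hx // hmul0l.
    by rewrite hy ?hmul0r //; lia.
  move=> n hn; rewrite gmul_hmul; apply: summx_sub => i _; apply: summx_sub => j _.
  exact: hmul_prodmx_ge2.
have Phomog d : (d <= 1)%N -> forall x, homog d x -> P x.
  move=> hd x hx; split; first exact: homog_fsupp hx.
  by move=> m hm; rewrite hx ?sub0mx //; apply: contraTneq hm => ->; rewrite ltnNge hd.
move=> n hn; rewrite -sub1mx; apply/row_subP => r.
have := gen P PS Pmul (Phomog 0%N isT) (Phomog 1%N isT) _ (homog_fsupp (homog_gsingle (row r 1%:M))).
by case=> _ /(_ n hn); rewrite gsingle_id.
Qed.

End Generation.

Section CoradicalDegreeZero.
Variables (k : fieldType) (A : gdata k).
Hypothesis comul_graded : forall n i j c a b, (i + j)%N != n -> gdc A n i j c a b = 0.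
Hypothesis counit_r : forall n c b, \sum_(u < gdim A 0) gdc A n n 0 c b u * gcu A u = (c == b)%:R.

Lemma subcoalg_slice_r (D : gvec A -> Prop) x i a : subcoalg D -> D x ->
  exists y, D y /\ forall m, y m = row a (gcomul x i m).
Proof.
move=> [DS Dco] /Dco [m [u [v [huv e]]]].
exists (fun n => \sum_(r < m) u r i 0 a *: v r n); split.
  by apply: subspace_sum => // r; case: (huv r).
move=> n; rewrite e; apply/rowP => b; rewrite !mxE !summxE.
by apply: eq_bigr => r _; rewrite !mxE big_ord1 !mxE.
Qed.

Lemma subcoalg_slice_l (D : gvec A -> Prop) x j b : subcoalg D -> D x ->
  exists y, D y /\ forall m, y m = (col b (gcomul x m j))^T.
Proof.
move=> [DS Dco] /Dco [m [u [v [huv e]]]].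
exists (fun n => \sum_(r < m) v r j 0 b *: u r n); split.
  by apply: subspace_sum => // r; case: (huv r).
move=> n; rewrite e; apply/rowP => a; rewrite !mxE !summxE.
by apply: eq_bigr => r _; rewrite !mxE big_ord1 !mxE mulrC.
Qed.

Lemma subcoalg_homog0 (D : gvec A -> Prop) : subcoalg D -> subcoalg (fun x => D x /\ homog 0 x).
Proof.
move=> DC; have [[Df [D0 DL]] _] := DC.
have ES : subspace (fun x => D x /\ homog 0 x).
  split; first by move=> x [/Df].
  split; first by split.
  move=> c x y [Dx hx] [Dy hy]; split; first exact: DL.
  by move=> m hm; rewrite hx ?hy ?scaler0 ?addr0.
split=> // x [Dx hx].
have comul0 i j : (0 < i + j)%N -> gcomul x i j = 0.
  by move=> hij; apply: (gcomul_vanish comul_graded); rewrite hx // -lt0n.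
set T := gcomul x 0 0.
have [yf Hy] : exists yf : 'I_(gdim A 0) -> gvec A,
    forall a, (D (yf a) /\ homog 0 (yf a)) /\ yf a 0%N = row a T.
  apply: (choice (fun a y => (D y /\ homog 0 y) /\ y 0%N = row a T)) => a.
  have [y [Dy ey]] := subcoalg_slice_r (i := 0%N) a DC Dx.
  by exists y; split; [split=> // m hm; rewrite ey comul0 ?row0 // lt0n | rewrite ey].
have [zf Hz] : exists zf : 'I_(gdim A 0) -> gvec A,
    forall b, (D (zf b) /\ homog 0 (zf b)) /\ zf b 0%N = (col b T)^T.
  apply: (choice (fun b z => (D z /\ homog 0 z) /\ z 0%N = (col b T)^T)) => b.
  have [z [Dz ez]] := subcoalg_slice_l (j := 0%N) b DC Dx.
  by exists z; split; [split=> // m hm; rewrite ez comul0 ?col0 ?trmx0 // addn0 lt0n | rewrite ez].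
(* From T = T (pinvmx T) T, Delta x = sum_b (column b of T) (x) (row b of
   (pinvmx T) T), and both factors are combinations of slices of Delta x. *)
pose w b n := \sum_(a < gdim A 0) pinvmx T b a *: yf a n.
exists (gdim A 0), zf, w; split.
  by move=> b; split; [case: (Hz b) | apply: (subspace_sum ES) => a; case: (Hy a)].
move=> i j; have [->|hi] := posnP i; last first.
  rewrite comul0 ?addn_gt0 ?hi // big1 // => b _.
  by have [[_ hz] _] := Hz b; rewrite (hz i (lt0n_neq0 hi)) trmx0 mul0mx.
have [->|hj] := posnP j; last first.
  rewrite comul0 // big1 // => b _; rewrite /w big1 ?mulmx0 // => a _.
  by have [[_ hy] _] := Hy a; rewrite (hy j (lt0n_neq0 hj)) scaler0.
rewrite -/T -[LHS](mulmxKpV (submx_refl T)) -mulmxA -mulmx_sum_col_row.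
apply: eq_bigr => b _; have [_ ->] := Hz b; rewrite trmxK; congr (_ *m _).
apply/rowP => c; rewrite /w !mxE summxE; apply: eq_bigr => a _.
by have [_ ->] := Hy a; rewrite !mxE.
Qed.

Lemma fsupp_top_degree (x : gvec A) : fsupp x -> (exists n, x n != 0) ->
  exists N, x N != 0 /\ forall m, (N < m)%N -> x m = 0.
Proof.
case=> B; elim: B => [|B IH] hB [n hn]; first by move: hn; rewrite hB // eqxx.
have [hxB|hxB] := eqVneq (x B) 0; last by exists B; split => // m /hB.
apply: IH; last by exists n.
by move=> m; rewrite leq_eqVlt => /orP [/eqP <- //|/hB].
Qed.

Lemma gcomul_counit_r (x : gvec A) n a :
  \sum_b gcomul x n 0 a b * gcu A b = x n 0 a.
Proof.
under eq_bigr => b _ do rewrite gcomulE // addn0 mulr_suml.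
rewrite exchange_big /= -[RHS](sum_mul_delta (fun c => x n 0 c) a); apply: eq_bigr => c _.
by rewrite -counit_r mulr_sumr; apply: eq_bigr => b _; rewrite mulrA.
Qed.

(* The slice of Delta x through a nonzero entry of the top component of x lies
   in degree 0, and it is nonzero because (id (x) epsilon) Delta = id. *)
Lemma subcoalg_homog0_neq0 (D : gvec A -> Prop) x : subcoalg D -> D x -> (exists n, x n != 0) ->
  exists y, (D y /\ homog 0 y) /\ y 0%N != 0.
Proof.
move=> DC Dx /(fsupp_top_degree (proj1 (proj1 DC) x Dx)) [N [/rV0Pn [a ha] top]].
have [y [Dy ey]] := subcoalg_slice_r (i := N) a DC Dx.
exists y; split.
  split=> // m /negPf hm; rewrite ey (gcomul_vanish comul_graded) ?row0 //.
  by rewrite top // -addn1 leq_add2l lt0n hm.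
apply: contraNneq ha => y0; rewrite -gcomul_counit_r big1 // => b _.
by have := congr1 (fun v : 'rV_ _ => v 0 b) y0; rewrite ey !mxE => ->; rewrite mul0r.
Qed.

Lemma simple_subcoalg_homog0 (D : gvec A -> Prop) x : simple_subcoalg D -> D x -> homog 0 x.
Proof.
case=> [DC [[x0 [Dx0 hx0]] Dmin]] Dx.
have [y [Ey y0]] := subcoalg_homog0_neq0 DC Dx0 hx0.
case: (Dmin _ (subcoalg_homog0 DC) (fun x h => proj1 h)) => [/(_ y Ey 0%N)|DE].
  by move/eqP: y0.
by case: (DE x Dx).
Qed.

Lemma coradical_homog0 (x : gvec A) : coradical x -> homog 0 x.
Proof.
case=> m [Ds [y [hy ex]]] n hn; rewrite ex big1 // => r _.
by have [hs [_ Dy]] := hy r; apply: (simple_subcoalg_homog0 hs Dy).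
Qed.

End CoradicalDegreeZero.

Section DegreeZeroAlgebra.
Variables (k : fieldType) (H : gdata k).
Local Notation d := (gdim H 0).
Local Notation G := (gmc H 0 0 0).
Local Notation m0 := (@mul0 k H).
Hypothesis unit_l : forall b c : 'I_d, \sum_(u < d) gun H u * G u b c = (b == c)%:R.
Hypothesis unit_r : forall a c : 'I_d, \sum_(u < d) G a u c * gun H u = (a == c)%:R.
Hypothesis assoc0 : forall a b g c : 'I_d,
  \sum_(e < d) G a b e * G e g c = \sum_(f < d) G b g f * G a f c.

Lemma mul0_linr c x y z : m0 z (c *: x + y) = c *: m0 z x + m0 z y.
Proof.
apply/rowP => c'; rewrite !mxE mulr_sumr -big_split /=; apply: eq_bigr => a _.
rewrite mulr_sumr -big_split /=; apply: eq_bigr => b _; rewrite !mxE; ring.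
Qed.

Lemma mul0_addr x y z : m0 z (x + y) = m0 z x + m0 z y.
Proof. by rewrite -{1}[x]scale1r mul0_linr scale1r. Qed.

Lemma mul00l x : m0 0 x = 0.
Proof. by apply/rowP => c; rewrite !mxE big1 // => a _; rewrite big1 // => b _; rewrite mxE !mul0r. Qed.

Lemma mul00r x : m0 x 0 = 0.
Proof. by apply/rowP => c; rewrite !mxE big1 // => a _; rewrite big1 // => b _; rewrite mxE mulr0 mul0r. Qed.

Definition one0 : 'rV[k]_d := \row_u gun H u.

Lemma mul01l x : m0 one0 x = x.
Proof.
apply/rowP => c; rewrite !mxE exchange_big /= -[RHS](sum_mul_delta (fun b => x 0 b) c).
apply: eq_bigr => b _; rewrite -unit_l mulr_sumr; apply: eq_bigr => u _; rewrite mxE; ring.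
Qed.

Lemma mul01r x : m0 x one0 = x.
Proof.
apply/rowP => c; rewrite !mxE -[RHS](sum_mul_delta (fun b => x 0 b) c).
apply: eq_bigr => a _; rewrite -unit_r mulr_sumr; apply: eq_bigr => u _; rewrite mxE; ring.
Qed.

Lemma mul0A x y z : m0 (m0 x y) z = m0 x (m0 y z).
Proof.
have sumL (X : 'I_d -> 'I_d -> 'I_d -> k) (Z : 'I_d -> 'I_d -> k) :
    \sum_e \sum_g (\sum_a \sum_b X a b e) * Z e g = \sum_a \sum_b \sum_g \sum_e X a b e * Z e g.
  transitivity (\sum_e \sum_g \sum_a \sum_b X a b e * Z e g).
    apply: eq_bigr => e _; apply: eq_bigr => g _.
    by rewrite big_distrl; apply: eq_bigr => a _; rewrite big_distrl.
  under eq_bigr => e _ do (rewrite exchange_big; under eq_bigr => a _ do rewrite exchange_big).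
  rewrite exchange_big; apply: eq_bigr => a _; rewrite exchange_big; apply: eq_bigr => b _.
  by rewrite exchange_big.
have sumR (Y : 'I_d -> k) (W : 'I_d -> 'I_d -> 'I_d -> k) (V : 'I_d -> 'I_d -> k) :
    \sum_a \sum_f Y a * (\sum_b \sum_g W b g f) * V a f =
    \sum_a \sum_b \sum_g \sum_f Y a * W b g f * V a f.
  apply: eq_bigr => a _.
  transitivity (\sum_f \sum_b \sum_g Y a * W b g f * V a f).
    apply: eq_bigr => f _; rewrite big_distrr big_distrl; apply: eq_bigr => b _.
    by rewrite big_distrr big_distrl.
  rewrite exchange_big; apply: eq_bigr => b _; by rewrite exchange_big.
apply/rowP => c; rewrite !mxE.
under eq_bigr => e _ do under eq_bigr => g _ do rewrite mxE -mulrA.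
rewrite (sumL (fun a b e => x 0 a * y 0 b * G a b e) (fun e g => z 0 g * G e g c)).
under [RHS]eq_bigr => a _ do under eq_bigr => f _ do rewrite mxE.
rewrite (sumR (fun a => x 0 a) (fun b g f => y 0 b * z 0 g * G b g f) (fun a f => G a f c)).
apply: eq_bigr => a _; apply: eq_bigr => b _; apply: eq_bigr => g _.
transitivity (x 0 a * y 0 b * z 0 g * \sum_e G a b e * G e g c).
  by rewrite mulr_sumr; apply: eq_bigr => e _; ring.
by rewrite assoc0 mulr_sumr; apply: eq_bigr => f _; ring.
Qed.

(* the image of f in L^0 under the comultiplication of L, as a d x d matrix *)
Definition comul0mx (f : 'rV[k]_d) : 'M[k]_d := \matrix_(a, b) \sum_c f 0 c * G a b c.

Lemma mul0_pairing f y x : f *m (m0 y x)^T = y *m comul0mx f *m x^T.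
Proof.
have sumL (F : 'I_d -> k) (X : 'I_d -> 'I_d -> 'I_d -> k) :
    \sum_c F c * (\sum_a \sum_b X a b c) = \sum_a \sum_b \sum_c F c * X a b c.
  transitivity (\sum_c \sum_a \sum_b F c * X a b c).
    by apply: eq_bigr => c _; rewrite big_distrr; apply: eq_bigr => a _; rewrite big_distrr.
  by rewrite exchange_big; apply: eq_bigr => a _; rewrite exchange_big.
have sumR (Y : 'I_d -> k) (W : 'I_d -> 'I_d -> 'I_d -> k) (Z : 'I_d -> k) :
    \sum_b (\sum_a Y a * (\sum_c W a b c)) * Z b = \sum_a \sum_b \sum_c Y a * W a b c * Z b.
  transitivity (\sum_b \sum_a \sum_c Y a * W a b c * Z b); last by rewrite exchange_big.
  apply: eq_bigr => b _; rewrite big_distrl; apply: eq_bigr => a _.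
  by rewrite big_distrr big_distrl.
apply/matrixP => i j; rewrite !mxE (ord1 i) (ord1 j).
under eq_bigr => c _ do rewrite !mxE.
rewrite (sumL (fun c => f 0 c) (fun a b c => y 0 a * x 0 b * G a b c)).
under [RHS]eq_bigr => b _ do (rewrite !mxE; under eq_bigr => a _ do rewrite !mxE).
rewrite (sumR (fun a => y 0 a) (fun a b c => f 0 c * G a b c) (fun b => x 0 b)).
by apply: eq_bigr => a _; apply: eq_bigr => b _; apply: eq_bigr => c _; ring.
Qed.

Definition rmulmx (x : 'rV[k]_d) : 'M[k]_d := \matrix_(a < d) m0 'e_a x.

Lemma mul0_rmulmx c x : m0 c x = c *m rmulmx x.
Proof.
apply/rowP => c'; rewrite !mxE; apply: eq_bigr => a _; rewrite !mxE.
rewrite [X in _ = _ * X](bigD1 a) //= [X in _ = _ * (_ + X)]big1 ?addr0; last first.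
  by move=> a' ha'; rewrite big1 // => b _; rewrite !mxE /= (negbTE ha') !mul0r.
rewrite mulr_sumr; apply: eq_bigr => b _; rewrite !mxE /= !eqxx /=; ring.
Qed.

End DegreeZeroAlgebra.

Section SemisimpleDegreeZero.
Variables (k : fieldType) (H : gdata k).
Local Notation d := (gdim H 0).
Local Notation G := (gmc H 0 0 0).
Local Notation m0 := (@mul0 k H).
Hypothesis unit_l : forall b c : 'I_d, \sum_(u < d) gun H u * G u b c = (b == c)%:R.
Hypothesis unit_r : forall a c : 'I_d, \sum_(u < d) G a u c * gun H u = (a == c)%:R.
Hypothesis assoc0 : forall a b g c : 'I_d,
  \sum_(e < d) G a b e * G e g c = \sum_(f < d) G b g f * G a f c.
Hypothesis semisimple : semisimple0 H.

(* the row space of M is a subcoalgebra of L^0 = (H^0)^* *)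
Definition subcoalg0mx (M : 'M[k]_d) := forall v : 'rV[k]_d, (v <= M)%MS ->
  (comul0mx v <= M)%MS /\ ((comul0mx v)^T <= M)%MS.

Definition right_ideal0 (I : 'M[k]_d) :=
  forall x y : 'rV[k]_d, (x <= I)%MS -> (m0 x y <= I)%MS.

Lemma ideal_of_subcoalg0 N : subcoalg0mx N ->
  left_ideal0 (kermx N^T) /\ right_ideal0 (kermx N^T).
Proof.
move=> HN; split => x y hx; apply: sub_kermx_trP => g hg;
  rewrite -[LHS]trmxK trmx_mul trmxK mul0_pairing //; have [h1 h2] := HN g hg.
  by rewrite -mulmxA (mulmx_tr_kermx hx h1) mulmx0 trmx0.
have -> : x *m comul0mx g = 0.
  by rewrite -[LHS]trmxK trmx_mul (mulmx_tr_kermx hx h2) trmx0.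
by rewrite mul0mx trmx0.
Qed.

Lemma subcoalg0_of_ideal K : left_ideal0 K -> right_ideal0 K -> subcoalg0mx (kermx K^T).
Proof.
have orth f g : (f <= kermx K^T)%MS -> (g <= K)%MS -> f *m g^T = 0.
  by move=> hf hg; rewrite -[LHS]trmxK trmx_mul trmxK (mulmx_tr_kermx hf hg) trmx0.
move=> lK rK f hf; split; apply: sub_kermx_trP => g hg.
  apply/row_matrixP => a; rewrite row0 row_mul rowE -mul0_pairing //.
  by apply: orth hf _; apply: lK.
apply/row_matrixP => b; rewrite row0 row_mul -tr_col colE -trmx_mul mulmxA.
by rewrite -trmx_delta -mul0_pairing // orth ?trmx0 //; apply: rK.
Qed.

Lemma right_annihilator0 (I : 'M[k]_d) :
  exists K : 'M[k]_d, forall x, (forall i, (i <= I)%MS -> m0 i x = 0) <-> (x <= K)%MS.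
Proof.
apply: submx_of_linear_pred => [i _|c u v h1 h2 i hi]; first exact: mul00r.
by rewrite mul0_linr h1 // h2 // scaler0 addr0.
Qed.

Section Annihilator.
Variables I K : 'M[k]_d.
Hypotheses (lI : left_ideal0 I) (rI : right_ideal0 I).
Hypothesis annK : forall x, (forall i, (i <= I)%MS -> m0 i x = 0) <-> (x <= K)%MS.

Lemma annihilator_left_ideal : left_ideal0 K.
Proof.
by move=> x y /annK hx; apply/annK => i hi; rewrite -mul0A //; apply: hx; apply: rI.
Qed.

Lemma annihilator_right_ideal : right_ideal0 K.
Proof. by move=> x y /annK hx; apply/annK => i hi; rewrite -mul0A // hx // mul00l. Qed.

(* Writing 1 = e + f along H^0 = I (+) J, the component f annihilates I,
   since I f lies both in I and in the left ideal J. *)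
Lemma ideal_add_annihilator (h : 'rV[k]_d) : (h <= I + K)%MS.
Proof.
have [J [lJ [cIJ fIJ]]] := semisimple lI.
have /sub_addsmxP [[u1 u2] /= e1] : (one0 H <= I + J)%MS by apply: submx_trans fIJ; apply: submx1.
have fK : (u2 *m J <= K)%MS.
  by apply/annK => i hi; apply: (capmx0_eq0 cIJ); [apply: rI | apply: lJ; apply: submxMl].
rewrite -[h](mul01r unit_r) e1 mul0_addr; apply: addmx_sub_adds; first by apply: lI; apply: submxMl.
by apply: annihilator_left_ideal.
Qed.

(* For x in I and in K, the left ideal H^0 x has a complement J' with
   1 = c x + j; then x = x c x + x j = x j lies in H^0 x and in J'. *)
Lemma ideal_cap_annihilator (x : 'rV[k]_d) : (x <= I)%MS -> (x <= K)%MS -> x = 0.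
Proof.
move=> xI xK.
have lL : left_ideal0 (rmulmx x).
  by move=> w y /submxP [c ->]; rewrite -mul0_rmulmx -mul0A // mul0_rmulmx submxMl.
have [J' [lJ' [cLJ fLJ]]] := semisimple lL.
have /sub_addsmxP [[a b] /= e2] : (one0 H <= rmulmx x + J')%MS.
  by apply: submx_trans fLJ; apply: submx1.
have ex : x = m0 x (b *m J').
  rewrite -{1}[x](mul01r unit_r) e2 mul0_addr -mul0_rmulmx -mul0A //.
  by move/annK: xK => -> //; [rewrite add0r | apply: rI].
apply: (capmx0_eq0 cLJ); first by rewrite -{1}(mul01l unit_l x) mul0_rmulmx submxMl.
by rewrite ex; apply: lJ'; apply: submxMl.
Qed.

End Annihilator.

Lemma subcoalg0_complement N : subcoalg0mx N -> exists F, subcoalg0mx F /\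
  (forall g : 'rV[k]_d, (g <= N)%MS -> (g <= F)%MS -> g = 0) /\ row_full (N + F)%MS.
Proof.
move=> HN; have [lI rI] := ideal_of_subcoalg0 HN; set I := kermx N^T in lI rI *.
have [K annK] := right_annihilator0 I.
have IK_full : ((1%:M : 'M[k]_d) <= I + K)%MS.
  by apply/row_subP => j; apply: (ideal_add_annihilator lI rI annK).
have rankIK : (\rank I + \rank K)%N = d.
  rewrite -mxrank_sum_cap rank_cap0 => [|g]; last exact: (ideal_cap_annihilator rI annK).
  by apply/eqP; rewrite addn0 eqn_leq rank_leq_col /= -{1}(mxrank1 k d) mxrankS.
exists (kermx K^T); split.
  exact: subcoalg0_of_ideal (annihilator_left_ideal rI annK) (annihilator_right_ideal annK).
have NF0 (g : 'rV[k]_d) : (g <= N)%MS -> (g <= kermx K^T)%MS -> g = 0.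
  move=> gN gF; case/sub_addsmxP: IK_full => [[U1 U2] /= e].
  rewrite -[g]mulmx1 -[1%:M]trmxK trmx1 e linearD /= (trmx_mul U1 I) (trmx_mul U2 K) mulmxDr !mulmxA.
  by rewrite (mulmx_tr_kermx (submx_refl I) gN) (sub_kermxP gF) !mul0mx addr0.
split; first exact: NF0.
rewrite /row_full; apply/eqP; have := mxrank_sum_cap N (kermx K^T).
rewrite rank_cap0 //.
move: rankIK; rewrite /I !mxrank_ker !mxrank_tr.
have := rank_leq_col N; have := rank_leq_col K; lia.
Qed.

Lemma subcoalg0_cap M F : subcoalg0mx M -> subcoalg0mx F -> subcoalg0mx (M :&: F)%MS.
Proof.
move=> HM HF v; rewrite sub_capmx => /andP [vM vF].
by have [h1 h2] := HM v vM; have [h3 h4] := HF v vF; rewrite !sub_capmx h1 h2 h3 h4.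
Qed.

Lemma split_subcoalg0 M N : subcoalg0mx M -> subcoalg0mx N -> (N <= M)%MS -> N != 0 ->
  exists F, [/\ subcoalg0mx F, (F <= M)%MS, (\rank F < \rank M)%N & (M <= N + F)%MS].
Proof.
move=> HM HN sNM N0; have [F [HF [NF0 NF_full]]] := subcoalg0_complement HN.
exists (M :&: F)%MS; split; [exact: subcoalg0_cap | exact: capmxSl | |].
  have := mxrank_sum_cap N (M :&: F)%MS.
  rewrite rank_cap0 => [|g gN /(submx_trans)/(_ (capmxSr _ _))]; last exact: NF0.
  have : (\rank (N + (M :&: F))%MS <= \rank M)%N.
    by apply: mxrankS; rewrite addsmx_sub sNM capmxSl.
  have : (0 < \rank N)%N by rewrite lt0n mxrank_eq0.
  lia.
apply/row_subP => j; have /sub_addsmxP [[w1 w2] /= ej] := submx_full (row j M) NF_full.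
rewrite ej addmx_sub_adds ?submxMl // sub_capmx submxMl andbT.
have -> : w2 *m F = row j M - w1 *m N by rewrite ej addrC addKr.
by rewrite addmx_sub ?row_sub // -mulNmx; apply: submx_trans (submxMl _ _) sNM.
Qed.

End SemisimpleDegreeZero.

Section SumOfSimples.
Variables (k : fieldType) (A : gdata k).

Lemma sum_of_simples_mono (D D' : gvec A -> Prop) x : (forall y, D y -> D' y) ->
  sum_of_simples D x -> sum_of_simples D' x.
Proof.
move=> hD [m [Ds [y [h e]]]]; exists m, Ds, y; split => // r.
by have [h1 [h2 h3]] := h r; split => //; split => // z /h2 /hD.
Qed.

Lemma sum_of_simples0 (D : gvec A -> Prop) : sum_of_simples D (gzero A).
Proof.
exists 0%N, (fun _ _ => False), (fun _ => gzero A); split; first by case.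
by move=> n; rewrite big_ord0.
Qed.

Lemma sum_of_simples_simple (D D' : gvec A -> Prop) x :
  simple_subcoalg D' -> (forall y, D' y -> D y) -> D' x -> sum_of_simples D x.
Proof.
by move=> hs hD hx; exists 1%N, (fun _ => D'), (fun _ => x); split=> // n; rewrite big_ord1.
Qed.

Lemma sum_of_simplesD (D : gvec A -> Prop) x y : sum_of_simples D x -> sum_of_simples D y ->
  sum_of_simples D (fun n => x n + y n).
Proof.
move=> [m1 [Ds1 [y1 [h1 e1]]]] [m2 [Ds2 [y2 [h2 e2]]]].
exists (m1 + m2)%N, (fun r => match split r with inl r1 => Ds1 r1 | inr r2 => Ds2 r2 end),
  (fun r => match split r with inl r1 => y1 r1 | inr r2 => y2 r2 end); split.
  by move=> r; case: (split r) => r'; [apply: h1 | apply: h2].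
move=> n; rewrite big_split_ord e1 e2; congr (_ + _); apply: eq_bigr => r _.
  by rewrite -[lshift m2 r]/(unsplit (inl r)) unsplitK.
by rewrite -[rshift m1 r]/(unsplit (inr r)) unsplitK.
Qed.

End SumOfSimples.

Section DualDegreeZero.
Variables (k : fieldType) (H : gdata k).
Local Notation d := (gdim H 0).
Local Notation G := (gmc H 0 0 0).
Local Notation L := (gdual H).
Hypothesis mul_graded : forall i j n a b c, (i + j)%N != n -> gmc H i j n a b c = 0.
Hypothesis unit_l : forall b c : 'I_d, \sum_(u < d) gun H u * G u b c = (b == c)%:R.
Hypothesis unit_r : forall a c : 'I_d, \sum_(u < d) G a u c * gun H u = (a == c)%:R.
Hypothesis assoc0 : forall a b g c : 'I_d,
  \sum_(e < d) G a b e * G e g c = \sum_(f < d) G b g f * G a f c.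
Hypothesis semisimple : semisimple0 H.

Definition deg0mx (M : 'M[k]_d) (x : gvec L) := homog 0 x /\ (x 0%N <= M)%MS.

Lemma dual_comul_graded n i j c a b : (i + j)%N != n -> gdc L n i j c a b = 0.
Proof. exact: mul_graded. Qed.

Lemma gcomul_dual_gsingle0 (v : 'rV[k]_d) : gcomul (gsingle (A := L) (n := 0) v) 0 0 = comul0mx v.
Proof. by rewrite (gcomul_gsingle dual_comul_graded); apply/matrixP => a b; rewrite !mxE. Qed.

Lemma gcomul_dual_gsingle0_neq (v : 'rV[k]_d) i j : (i != 0%N) || (j != 0%N) ->
  gcomul (gsingle (A := L) (n := 0) v) i j = 0.
Proof.
move=> h; apply: (gcomul_vanish dual_comul_graded); rewrite gsingle_neq //.
by case: i j h => [|i] [|j].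
Qed.

Lemma subspace_deg0mx M : subspace (deg0mx M).
Proof.
split; first by move=> x [hx _]; exact: homog_fsupp hx.
split; first by split => //; rewrite sub0mx.
move=> c x y [hx Mx] [hy My]; split; first by move=> m hm; rewrite hx ?hy ?scaler0 ?addr0.
by rewrite addmx_sub ?scalemx_sub.
Qed.

Lemma subcoalg_deg0mx M : subcoalg0mx M -> subcoalg (deg0mx M).
Proof.
move=> HM; split; first exact: subspace_deg0mx.
move=> x [hx xM]; rewrite (homog_gsingleE hx).
set v : 'rV[k]_d := x 0%N; set T := comul0mx v.
have [TM TtM] : (T <= M)%MS /\ (T^T <= M)%MS := HM _ xM.
pose Y := (pinvmx M)^T *m T.
have eT : T = M^T *m Y.
  rewrite /Y mulmxA -trmx_mul; apply: trmx_inj.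
  by rewrite [RHS]trmx_mul trmxK mulmxA mulmxKpV.
have YM : (Y <= M)%MS by apply: submx_trans TM; apply: submxMl.
exists d, (fun r => gsingle (A := L) (row r M)), (fun r => gsingle (A := L) (row r Y)); split.
  move=> r; split; (split; [exact: homog_gsingle | rewrite gsingle_id]); first exact: row_sub.
  by apply: submx_trans YM; apply: row_sub.
move=> i j; have [->|hi] := eqVneq i 0%N; last first.
  by rewrite gcomul_dual_gsingle0_neq ?hi // big1 // => r _; rewrite gsingle_neq // trmx0 mul0mx.
have [->|hj] := eqVneq j 0%N; last first.
  by rewrite gcomul_dual_gsingle0_neq ?hj ?orbT // big1 // => r _; rewrite (gsingle_neq _ hj) mulmx0.
rewrite gcomul_dual_gsingle0 -/v -/T eT -mulmx_sum_col_row; apply: eq_bigr => r _.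
by rewrite !gsingle_id tr_row.
Qed.

Lemma subcoalg_deg0mxP M (E : gvec L -> Prop) : subcoalg E -> (forall x, E x -> deg0mx M x) ->
  exists N, subcoalg0mx N /\ forall x, E x <-> deg0mx N x.
Proof.
move=> [[Ef [E0 EL]] Eco] EM.
have [N HN] : exists N : 'M[k]_d, forall v, E (gsingle (A := L) (n := 0) v) <-> (v <= N)%MS.
  apply: submx_of_linear_pred; first by rewrite gsingle0.
  by move=> c u v hu hv; rewrite gsingle_lin; apply: EL.
have EN x : E x <-> deg0mx N x.
  split=> [Ex|[hx /HN]]; last by rewrite -(homog_gsingleE hx).
  by have [hx _] := EM x Ex; split => //; apply/HN; rewrite -(homog_gsingleE hx).
exists N; split => // v /HN /Eco [m [u [w [huw e]]]].
have := e 0%N 0%N; rewrite gcomul_dual_gsingle0 => ->.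
have uN r : (u r 0%N <= N)%MS by have [/EN [_ ?] _] := huw r.
have wN r : (w r 0%N <= N)%MS by have [_ /EN [_ ?]] := huw r.
split; first by apply: summx_sub => r _; apply: submx_trans (wN r); apply: submxMl.
rewrite linear_sum /=; apply: summx_sub => r _.
by rewrite trmx_mul trmxK; apply: submx_trans (uN r); apply: submxMl.
Qed.

Lemma simple_deg0mx M : subcoalg0mx M -> M != 0 ->
  (forall N, subcoalg0mx N -> (N <= M)%MS -> N != 0 -> (M <= N)%MS) ->
  simple_subcoalg (deg0mx M).
Proof.
move=> HM /matrix0Pn [j [a ha]] Hmin; split; first exact: subcoalg_deg0mx.
have deg0_row N i : deg0mx N (gsingle (row i N)).
  by split; [exact: homog_gsingle | rewrite gsingle_id row_sub].
split.
  exists (gsingle (row j M)); split=> //; exists 0%N.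
  by rewrite gsingle_id; apply/rV0Pn; exists a; rewrite mxE.
move=> E EC EM; have [N [HN EN]] := subcoalg_deg0mxP EC EM.
have sNM : (N <= M)%MS.
  apply/row_subP => i; have /EM [_] : E (gsingle (row i N)) by apply/EN.
  by rewrite gsingle_id.
have [N0|N0] := eqVneq N 0.
  left => x /EN [hx]; rewrite N0 submx0 => /eqP x0 n.
  by have [->|hn] := eqVneq n 0%N; last exact: hx.
by right => x [hx xM]; apply/EN; split => //; apply: submx_trans xM (Hmin N HN sNM N0).
Qed.

Lemma deg0mx_sum_of_simples r M v : (\rank M <= r)%N -> subcoalg0mx M -> (v <= M)%MS ->
  sum_of_simples (deg0mx M) (gsingle (A := L) (n := 0) v).
Proof.
elim: r M v => [|r IH] M v hr HM vM.
  move: hr vM; rewrite leqn0 mxrank_eq0 => /eqP ->; rewrite submx0 => /eqP ->.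
  by rewrite gsingle0; apply: sum_of_simples0.
have [M0|M0] := eqVneq M 0.
  by move: vM; rewrite M0 submx0 => /eqP ->; rewrite gsingle0; apply: sum_of_simples0.
have [[N [HN [sNM [N0 nMN]]]]|Hmin] :=
  classic (exists N, subcoalg0mx N /\ (N <= M)%MS /\ N != 0 /\ ~~ (M <= N)%MS).
  have [F [HF sFM rF sMNF]] := split_subcoalg0 unit_l unit_r assoc0 semisimple HM HN sNM N0.
  have rN : (\rank N < \rank M)%N by apply: rank_ltmx; rewrite ltmxE sNM.
  have /sub_addsmxP [[w1 w2] /= ev] := submx_trans vM sMNF.
  have -> : gsingle (A := L) (n := 0) v =
      (fun m => gsingle (A := L) (n := 0) (w1 *m N) m + gsingle (A := L) (n := 0) (w2 *m F) m).
    rewrite ev -{1}[w1 *m N]scale1r gsingle_lin.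
    by apply: functional_extensionality_dep => m; rewrite scale1r.
  apply: sum_of_simplesD.
    apply: (sum_of_simples_mono (D := deg0mx N)) => [y [hy yN]|].
      by split=> //; apply: submx_trans sNM.
    by apply: IH; rewrite ?submxMl //; lia.
  apply: (sum_of_simples_mono (D := deg0mx F)) => [y [hy yF]|].
    by split=> //; apply: submx_trans sFM.
  by apply: IH; rewrite ?submxMl //; lia.
apply: (sum_of_simples_simple (D' := deg0mx M)) => //.
  apply: simple_deg0mx => // N HN sNM N0; apply: NNPP => nMN.
  by apply: Hmin; exists N; do 3!split=> //; apply/negP.
by split; [exact: homog_gsingle | rewrite gsingle_id].
Qed.

Lemma homog0_coradical_dual (x : gvec L) : homog 0 x -> coradical x.
Proof.
move=> hx; rewrite (homog_gsingleE hx).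
apply: (sum_of_simples_mono (D := deg0mx 1%:M)) => [y [hy _]|]; first exact: homog_fsupp hy.
apply: (deg0mx_sum_of_simples (r := d)); [exact: rank_leq_col | | exact: submx1].
by move=> v _; rewrite !submx1.
Qed.

End DualDegreeZero.

Theorem theorem2p2 (k : fieldType) (H : gdata k) :
  is_ghopf H ->
  (forall x : gvec H, homog 0 x <-> coradical x) ->
  cosemisimple (@homog k H 0) ->
  semisimple0 H ->
  (coradically_graded H /\ gen01 H <->
   coradically_graded (gdual H) /\ gen01 (gdual H)).
Proof.
move=> [mul_gr [comul_gr [assoc [unit_l [unit_r [coassoc [_ [counit_r _]]]]]]]] corH _ ss.
have assocL : forall i j l n a b g c,
     \sum_(e < gdim (gdual H) (i + j)) gmc (gdual H) i j (i + j) a b e * gmc (gdual H) (i + j) l n e g c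
   = \sum_(f < gdim (gdual H) (j + l)) gmc (gdual H) j l (j + l) b g f * gmc (gdual H) i (j + l) n a f c.
  move=> i j l n a b g c /=.
  by under eq_bigr do rewrite mulrC; under [RHS]eq_bigr do rewrite mulrC; apply: coassoc.
have corL : forall x : gvec (gdual H), homog 0 x <-> coradical x.
  move=> x; split; first exact: (homog0_coradical_dual mul_gr (unit_l 0%N) (unit_r 0%N) (assoc 0%N 0%N 0%N 0%N) ss).
  by apply: (coradical_homog0 (dual_comul_graded mul_gr)) => n c b /=; rewrite unit_r eq_sym.
rewrite (coradically_gradedP comul_gr corH) (coradically_gradedP (dual_comul_graded mul_gr) corL).
have mul_grL : forall i j n a b c, (i + j)%N != n -> gmc (gdual H) i j n a b c = 0.
  by move=> i j n a b c; apply: comul_gr.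
split=> -[inj gen].
  split; first by apply/(@strict_comul_inj_dual _ (gdual H)); apply: gen01_products_span.
  by apply: (products_span_gen01 mul_grL); apply/strict_comul_inj_dual.
split; last by apply: (products_span_gen01 mul_gr); apply/(@strict_comul_inj_dual _ (gdual H)).
by apply/strict_comul_inj_dual; apply: (gen01_products_span mul_grL assocL).
Qed.
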